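(* Let $R$ be a finite group and $S\subseteq R$. If $\mathrm{Cay}(R,S)$ is a nontrivial generalised wreath product with respect to subgroups $K$ and $H$, and $\mathbf{Z}(H)\cap K\not\leq \mathbf{Z}(R)$, then $\mathrm{Aut}(R)_S>1$.
   Context: $\mathbf{Z}(X)$ denotes the centre of a group $X$. $\mathrm{Aut}(R)_S$ is the group of automorphisms of $R$ fixing $S$ setwise. $\mathrm{Cay}(R,S)$ (vertex set $R$, arcs $r\to sr$ for $s\in S$) is a nontrivial generalised wreath product with respect to $K$ and $H$ if $1<K\trianglelefteq H<R$ and $K(S\setminus H)=S\setminus H=(S\setminus H)K$. *)

From mathcomp Require Import all_boot all_fingroup all_solvable.
Set Implicit Arguments. Unset Strict Implicit. Unset Printing Implicit Defensive.
Local Open Scope group_scope.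

(* Cay(R,S) is a nontrivial generalised wreath product w.r.t. K and H:
   1 < K <| H < R and K (S \ H) = S \ H = (S \ H) K. *)
Definition nontriv_gen_wreath (gT : finGroupType) (R : {set gT}) (S : {set gT})
    (K H : {set gT}) : Prop :=
  [/\ K :!=: 1, K <| H, H \proper R,
      K * (S :\: H) = S :\: H & (S :\: H) * K = S :\: H].

Definition AutS (gT : finGroupType) (R S : {set gT}) : {set {perm gT}} :=
  [set a in Aut R | [set a x | x in S] == S].

(** Pick z in Z(H) ∩ K outside Z(R).  Conjugation by z centralises S ∩ H
    because z ∈ Z(H), and maps S \ H into K (S \ H) K = S \ H because z ∈ K;
    hence it is an automorphism of R fixing S, and it is nontrivial because
    z is not central in R. *)

From mathcomp Require Import all_boot all_fingroup all_solvable.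
Set Implicit Arguments. Unset Strict Implicit. Unset Printing Implicit Defensive.
Local Open Scope group_scope.

Lemma AutS1 (gT : finGroupType) (R : {group gT}) (S : {set gT}) :
  1 \in AutS R S.
Proof.
rewrite inE group1 /=; apply/eqP/setP=> x.
by apply/imsetP/idP=> [[y yS ->]|xS]; [rewrite perm1 | exists x; rewrite ?perm1].
Qed.

Lemma AutS_conj_aut (gT : finGroupType) (R : {group gT}) (S : {set gT}) z :
  S \subset R -> z \in R -> S :^ z = S -> conj_aut R z \in AutS R S.
Proof.
move=> sSR zR SzS; rewrite inE Aut_aut /=; apply/eqP.
rewrite -[RHS]SzS; apply: eq_in_imset => x xS.
by rewrite conj_autE // (subsetP sSR).
Qed.

Lemma conj_aut_neq1 (gT : finGroupType) (R : {group gT}) z :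
  z \in R -> z \notin 'C(R) -> conj_aut R z != 1.
Proof.
move=> zR; apply: contraNneq => a1; rewrite -ker_conj_aut.
by apply/kerP; rewrite ?a1 // (subsetP (normG R)).
Qed.

Lemma conjs_id_mulg_stable (gT : finGroupType) (K : {group gT}) (A : {set gT}) z :
  K * A = A -> A * K = A -> z \in K -> A :^ z = A.
Proof.
move=> KA AK zK; apply/eqP; rewrite eqEcard cardJg leqnn andbT.
apply/subsetP=> _ /imsetP [x xA ->]; rewrite conjgE -AK -KA.
by rewrite mulgA !mem_mulg ?groupV.
Qed.

Lemma gen_wreath_conjsg_id (gT : finGroupType) (K : {group gT}) (H S : {set gT}) z :
  K * (S :\: H) = S :\: H -> (S :\: H) * K = S :\: H ->
  z \in K -> z \in 'C(S :&: H) -> S :^ z = S.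
Proof.
move=> KS SK zK zC; rewrite -{1}(setID S H) conjUg.
by rewrite (normP (subsetP (cent_sub _) z zC)) (conjs_id_mulg_stable KS SK zK) setID.
Qed.

Theorem lemma4p7 (gT : finGroupType) (R K H : {group gT}) (S : {set gT}) :
  S \subset R ->
  nontriv_gen_wreath R S K H ->
  ~~ ('Z(H) :&: K \subset 'Z(R)) ->
  (1 < #|AutS R S|)%N.
Proof.
move=> sSR [_ /andP [sKH _] /andP [sHR _] KS SK].
case/subsetPn=> z /setIP [/setIP [_ zCH] zK] zNZ.
have zR : z \in R by rewrite (subsetP sHR) ?(subsetP sKH).
have zCSH : z \in 'C(S :&: H) by rewrite (subsetP (centS (subsetIr S H))).
have zNCR : z \notin 'C(R) by apply: contra zNZ => zCR; rewrite inE zR.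
apply/card_gt1P; exists 1, (conj_aut R z); split.
- exact: AutS1.
- exact/AutS_conj_aut/(gen_wreath_conjsg_id KS SK).
- by rewrite eq_sym conj_aut_neq1.
Qed.
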